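(* For every $d \in \{2,3,4,5,8,11,12,16,24,40\}$, the sequence $\left(\left\lfloor n^{10}/d \right\rfloor\right)_{n \ge 1}$ is eventually prime-free.
   Context: A sequence $(a_n)_{n\ge 1}$ of positive integers is called eventually prime-free if there exists an index $n_0$ such that $a_n$ is composite for all $n \ge n_0$. (Here, as in the paper, this is understood as: only finitely many terms $a_n$ are prime.) *)

From mathcomp Require Import all_boot.
Set Implicit Arguments. Unset Strict Implicit. Unset Printing Implicit Defensive.

Definition eventually_prime_free (a : nat -> nat) : Prop :=
  exists n0 : nat, forall n : nat, n0 <= n -> ~~ prime (a n).

From mathcomp Require Import all_boot.
From mathcomp Require Import zify.

Set Implicit Arguments.
Unset Strict Implicit.
Unset Printing Implicit Defensive.

(* If [n ^ 10 = q d + s ^ 2] with [s] small, then [q d = (n^5 - s)(n^5 + s)], and a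
   prime [q] would force [d] to be a multiple of one of these two factors, which
   both exceed [d].  For the listed [d], the tenth power of every residue modulo
   [d] is a square [s ^ 2] with [s <= 5], except when [d = 40] and [n = +-2] modulo
   [10]; there [n ^ 10 = 24] modulo [200], so that [5] divides [n ^ 10 %/ 40]. *)

Lemma sqr_divn_not_prime N d s :
  0 < d -> N ^ 2 %% d = s ^ 2 -> s + d < N -> ~~ prime (N ^ 2 %/ d).
Proof.
move=> d_gt0 rem_sqr s_small; apply/negP => q_prime.
set q := N ^ 2 %/ d in q_prime.
have q_gt0 := prime_gt0 q_prime.
have factor_sqr : d * q = (N - s) * (N + s).
  have := divn_eq (N ^ 2) d; rewrite rem_sqr -/q; nia.
have divisor_ge (f g : nat) : d * q = f * g -> q %| f -> g <= d.
  move=> dq_fg /dvdnP [k f_kq]; rewrite f_kq mulnAC in dq_fg.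
  have d_kg : d = k * g by apply/eqP; rewrite -(eqn_pmul2r q_gt0) dq_fg.
  by move: d_gt0; rewrite d_kg muln_gt0 => /andP [k_gt0 _]; apply: leq_pmull.
have : q %| (N - s) * (N + s) by rewrite -factor_sqr dvdn_mull.
rewrite Euclid_dvdM // => /orP [q_dvd | q_dvd].
- have := divisor_ge _ _ factor_sqr q_dvd; lia.
- rewrite [RHS]mulnC in factor_sqr; have := divisor_ge _ _ factor_sqr q_dvd; lia.
Qed.

Definition expn_mod d a k := iter k (fun x => a * x %% d) (1 %% d).

Lemma expn_modE d a k : expn_mod d a k = a ^ k %% d.
Proof. by elim: k => //= k ->; rewrite modnMmr expnS. Qed.

Lemma expn_mod_modn d n k : expn_mod d (n %% d) k = n ^ k %% d.
Proof. by rewrite expn_modE modnXm. Qed.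

Definition is_square_le b r := has (fun s => r == s ^ 2) (iota 0 b.+1).

Lemma tenth_power_divn_not_prime b d n :
  0 < d -> is_square_le b (n ^ 10 %% d) -> b + d < n ^ 5 -> ~~ prime (n ^ 10 %/ d).
Proof.
move=> d_gt0 /hasP [s]; rewrite mem_iota => /andP [_ s_le_b] /eqP rem_sqr.
rewrite -[10]/(5 * 2) expnM in rem_sqr * => n5_large.
apply: (sqr_divn_not_prime d_gt0 rem_sqr); lia.
Qed.

Lemma tenth_power_mod200 :
  all (fun i => (i %% 10 \in [:: 2; 8]) ==> (expn_mod 200 i 10 == 24)) (iota 0 200).
Proof. by vm_compute. Qed.

Lemma dvd5_tenth_power_div40 n : n %% 10 \in [:: 2; 8] -> 5 %| n ^ 10 %/ 40.
Proof.
move=> n_mod10; have /(allP tenth_power_mod200) : n %% 200 \in iota 0 200.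
  by rewrite mem_iota ltn_pmod.
rewrite (modn_dvdm _ (isT : 10 %| 200)) n_mod10 expn_mod_modn implyTb => /eqP rem24.
by rewrite /dvdn modn_divl rem24.
Qed.

Lemma tenth_power_div40_not_prime n :
  2 < n -> n %% 10 \in [:: 2; 8] -> ~~ prime (n ^ 10 %/ 40).
Proof.
move=> n_gt2 /dvd5_tenth_power_div40 dvd5; apply/negP => q_prime.
have q_eq5 := prime_nt_dvdP q_prime (isT : 5 != 1) dvd5.
have : 3 ^ 10 <= n ^ 10 by rewrite leq_exp2r.
have := divn_eq (n ^ 10) 40; lia.
Qed.

Lemma tenth_power_residues :
  all (fun d => all (fun i =>
          is_square_le 5 (expn_mod d i 10) || (d == 40) && (i %% 10 \in [:: 2; 8]))
        (iota 0 d))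
      [:: 2; 3; 4; 5; 8; 11; 12; 16; 24; 40].
Proof. by vm_compute. Qed.

Theorem theorem7 (d : nat) :
  d \in [:: 2; 3; 4; 5; 8; 11; 12; 16; 24; 40] ->
  eventually_prime_free (fun n => n ^ 10 %/ d).
Proof.
move=> d_in; exists 3 => n n_gt2.
have /andP [d_gt0 d_le40] : 0 < d <= 40.
  by move: d_in; rewrite !inE; lia.
have /(allP (allP tenth_power_residues d d_in)) : n %% d \in iota 0 d.
  by rewrite mem_iota ltn_pmod.
case/orP => [small_sqr | /andP [/eqP d40 n_mod10]].
- rewrite expn_mod_modn in small_sqr.
  apply: (tenth_power_divn_not_prime d_gt0 small_sqr).
  have : 3 ^ 5 <= n ^ 5 by rewrite leq_exp2r.
  lia.
- rewrite d40 (modn_dvdm _ (isT : 10 %| 40)) in n_mod10 *.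
  exact: tenth_power_div40_not_prime.
Qed.
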